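(* Let $G$ be a finite simple graph with a perfect matching $M$, let $\mathcal{C}$ be an optimal edge $2$-colouring of $G$, and let $\mathcal{F}$, $P$, $\mathcal{C}_M$, $P_j,D_j,U_j,V_j,S_j$ and the sets $\mathcal{H},\mathcal{L}$ be as in the context. Then: (a) $|S_j|\ge |P_j|+1$ for all $j\in\mathcal{C}_M$; (b) $\mathrm{rp}(S_j)\ge (|P_j|-1)/2$ for all $j\in\mathcal{C}_M$; (c) if $D_j\ne\emptyset$ then $j\in\mathcal{H}$; (d) for $j\in\mathcal{L}$, every vertex of $S_j$ has its $M$-partner also in $S_j$; furthermore $S_j$ has a unique maximum element $v^\ast$ with respect to $\preceq_{\mathcal{F}}$; (e) $|S_j|\ge 4$ for every $j\in\mathcal{L}$.
   Context: $G\setminus M$ is the spanning subgraph with edge set $E(G)\setminus M$, with connected components $C_1,\dots,C_h$. An edge $2$-colouring assigns colours to edges (not necessarily properly) so that each vertex sees at most $2$ distinct colours; optimal means maximum number of colours. $\mathrm{mcl}(u)$ is the colour of the $M$-edge at $u$; $\mathcal{C}_M$ is the set of colours used on $M$ (matching colours) and $\mathcal{C}_N$ the remaining colours (non-matching colours). For a colour $i$, $G[i]$ is the subgraph spanned by the edges of colour $i$; for $i\in\mathcal{C}_N$ it is called a non-matching colour component, and $k_m$ denotes the number of non-matching colour components contained in $C_m$. Forests: rooted trees, $r(F)$ roots, $l(F)$ leaves (non-root vertices with no children); each tree has a depth-first indexing $\mathrm{dfs}_T$ (descendants get larger indices) and order $u\preceq_T v$ iff $\mathrm{dfs}_T(u)\ge\mathrm{dfs}_T(v)$;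 in a forest, vertices of different trees are incomparable. $(T_1,T_2)$ is a cascading pair if they are vertex-disjoint or $r(T_2)\in l(T_1)$ and $|V(T_1)\cap V(T_2)|=1$; $\mathcal{F}=\{F_1,\dots,F_l\}$ is a cascading sequence of forests if $V(F_i)\cap V(F_j)=\emptyset$ for $|i-j|\ge2$ and every tree of $F_i$ with every tree of $F_{i+1}$ forms a cascading pair. $V(\mathcal{F})=\bigcup_F V(F)$; an internal vertex of $\mathcal{F}$ is a vertex of some $F\in\mathcal{F}$ that is neither a root nor a leaf of $F$, and $\mathrm{Int}(\mathcal{F})$ is the set of these. $\preceq_{\mathcal{F}}$ is the transitive closure of ''$x\preceq_F y$ for some $F\in\mathcal{F}$''; $x\mathcal{F}y$ is the path $xFy$ in the forest $F\in\mathcal{F}$ containing an $x$–$y$ path. Standing data: $\mathcal{F}$ is a cascading sequence of forests in $G\setminus M$ with $\sum_{F\in\mathcal{F}}|l(F)|=\sum_{m=1}^h(k_m-1)$, with $\mathrm{Int}(\mathcal{F})\cap V(H)=\emptyset$ for every non-matching colour component $H$, and such that for each $F\in\mathcal{F}$ and $u\in r(F)\cup l(F)$ every edge of $F$ at $u$ has colour $\mathrm{mcl}(u)$. $P=\{(u_i,v_i)\}$ is a set of $\sum_{m}(k_m-1)$ pairs of vertices of $V(\mathcal{F})$ such that: (a) the $u_i$ are pairwise distinct; (b) $u_i\prec_{\mathcal{F}}v_i$ and the path $u_i\mathcal{F}v_i$ exists; (c) $\mathrm{mcl}(u_i)=\mathrm{mcl}(v_i)$; (d) $u_i\mathcal{F}v_i$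 is monochromatic of colour $\mathrm{mcl}(u_i)$; (e) every internal vertex $z$ of $u_i\mathcal{F}v_i$ has $\mathrm{mcl}(z)\ne\mathrm{mcl}(u_i)$; (f) for $i\ne j$ with $u_iv_i,u_jv_j\in M$ the paths $u_i\mathcal{F}v_i,u_j\mathcal{F}v_j$ share no internal vertex. For $j\in\mathcal{C}_M$: $P_j=\{(u,v)\in P:\mathrm{mcl}(u)=\mathrm{mcl}(v)=j\}$; $D_j=\{(u,v)\in P_j: uv\in M\}$ (denoted $C_j$ in the paper); $U_j$, $V_j$ are the sets of first and second coordinates of pairs in $P_j$; $S_j=U_j\cup V_j$. For an $M$-monochromatic set $S$ (all $M$-edges at vertices of $S$ have the same colour), $\mathrm{rp}(S)=i(S;M)-1$ where $i(S;M)$ is the number of $M$-edges incident with $S$. A colour $j\in\mathcal{C}_M$ is high ($j\in\mathcal{H}$) if $\mathrm{rp}(S_j)\ge(|P_j|-|D_j|)/2$, and low ($j\in\mathcal{L}$) otherwise. *)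

From mathcomp Require Import all_boot all_order all_algebra.
Set Implicit Arguments. Unset Strict Implicit. Unset Printing Implicit Defensive.
Import Order.TTheory GRing.Theory Num.Theory.

Definition simple_graph (V : finType) (E : {set {set V}}) : Prop :=
  forall e, e \in E -> #|e| = 2.

Definition perfect_matching (V : finType) (E M : {set {set V}}) : Prop :=
  M \subset E /\ forall v : V, #|[set e in M | v \in e]| = 1.

(* An edge colouring is a map from edges to colours (natural numbers);
   only its values on E matter. *)
Definition seen_colours (V : finType) (E : {set {set V}}) (c : {set V} -> nat)
  (v : V) : seq nat := undup [seq c e | e <- enum [set e in E | v \in e]].

Definition edge_2_colouring (V : finType) (E : {set {set V}}) (c : {set V} -> nat) : Prop :=
  forall v, size (seen_colours E c v) <= 2.

Definition used_colours (V : finType) (E : {set {set V}}) (c : {set V} -> nat) : seq nat :=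
  undup [seq c e | e <- enum E].

Definition num_colours (V : finType) (E : {set {set V}}) (c : {set V} -> nat) : nat :=
  size (used_colours E c).

Definition optimal_2_colouring (V : finType) (E : {set {set V}}) (c : {set V} -> nat) : Prop :=
  edge_2_colouring E c /\
  forall c' : {set V} -> nat, edge_2_colouring E c' -> num_colours E c' <= num_colours E c.

Definition medge (V : finType) (M : {set {set V}}) (u : V) : {set V} :=
  odflt set0 [pick e in M | u \in e].
Definition mcl (V : finType) (M : {set {set V}}) (c : {set V} -> nat) (u : V) : nat :=
  c (medge M u).

Definition matching_colour (V : finType) (M : {set {set V}}) (c : {set V} -> nat) (j : nat) : bool :=
  j \in [seq c e | e <- enum M].
Definition nonmatching_colour (V : finType) (E M : {set {set V}}) (c : {set V} -> nat) (i : nat) : bool :=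
  (i \in used_colours E c) && ~~ matching_colour M c i.

Definition colour_vertices (V : finType) (E : {set {set V}}) (c : {set V} -> nat) (i : nat) : {set V} :=
  \bigcup_(e in E | c e == i) e.

(* components C_1..C_h of G \ M (spanning subgraph), as vertex sets *)
Definition GminusM_rel (V : finType) (E M : {set {set V}}) : rel V :=
  fun x y => [set x; y] \in E :\: M.
Definition components (V : finType) (E M : {set {set V}}) : {set {set V}} :=
  [set [set y | connect (GminusM_rel E M) x y] | x : V].

Definition k_of (V : finType) (E M : {set {set V}}) (c : {set V} -> nat) (C : {set V}) : nat :=
  count (fun i => nonmatching_colour E M c i && (colour_vertices E c i \subset C))
        (used_colours E c).

Definition sum_k (V : finType) (E M : {set {set V}}) (c : {set V} -> nat) : int :=
  \sum_(C in components E M) (Posz (k_of E M c C) - 1)%R.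

(* A rooted forest: vertex set, parent map (roots are fixed points), and a
   depth-first index (compared only inside one tree). *)
Record forest (V : finType) := Forest {
  fV : {set V};
  fpar : V -> V;
  fdfs : V -> nat }.

Definition forest0 (V : finType) : forest V := Forest set0 id (fun _ => 0).

Section ForestDefs.
Variable V : finType.
Implicit Types (F : forest V) (x y u w : V).

Definition froot F x : V := iter #|V| (fpar F) x.
Definition anc F x : {set V} := [set iter n (fpar F) x | n : 'I_#|V|.+1].
Definition roots F : {set V} := [set v in fV F | fpar F v == v].
Definition children F u : {set V} := [set w in fV F | (fpar F w == u) && (w != u)].
Definition leaves F : {set V} := [set v in fV F | (fpar F v != v) && (children F v == set0)].
Definition internal F : {set V} := fV F :\: (roots F :|: leaves F).
Definition tree F (r : V) : {set V} := [set w in fV F | froot F w == r].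
Definition desc F u : {set V} := [set w in fV F | u \in anc F w].
Definition fedges F : {set {set V}} :=
  [set [set w; fpar F w] | w in [set w in fV F | fpar F w != w]].

(* F is a rooted forest in G \ M with a depth-first (preorder) indexing of
   each tree: indices are injective within a tree and the descendants of every
   vertex u occupy exactly the index interval [dfs u, dfs u + #desc u). *)
Definition is_forest (E M : {set {set V}}) F : Prop :=
  [/\ forall v, v \in fV F -> fpar F v \in fV F,
      forall v, v \in fV F -> fpar F v != v -> [set v; fpar F v] \in E :\: M,
      forall v, v \in fV F -> fpar F (froot F v) = froot F v,
      forall u w, u \in fV F -> w \in fV F -> froot F u = froot F w ->
                  fdfs F u = fdfs F w -> u = w &
      forall u, u \in fV F ->
        desc F u = [set w in fV F | (froot F w == froot F u) &&
                      (fdfs F u <= fdfs F w < fdfs F u + #|desc F u|)] ].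

Definition cascading_pair F1 (r1 : V) F2 (r2 : V) : bool :=
  [disjoint tree F1 r1 & tree F2 r2] ||
  ((r2 \in leaves F1 :&: tree F1 r1) && (#|tree F1 r1 :&: tree F2 r2| == 1)).

Definition cascading (Fs : seq (forest V)) : Prop :=
  (forall i j, i.+2 <= j -> j < size Fs ->
     [disjoint fV (nth (forest0 V) Fs i) & fV (nth (forest0 V) Fs j)]) /\
  (forall i, i.+1 < size Fs -> forall r1 r2,
     r1 \in roots (nth (forest0 V) Fs i) -> r2 \in roots (nth (forest0 V) Fs i.+1) ->
     cascading_pair (nth (forest0 V) Fs i) r1 (nth (forest0 V) Fs i.+1) r2).

Definition VFs (Fs : seq (forest V)) : {set V} := \bigcup_(F <- Fs) fV F.
Definition IntFs (Fs : seq (forest V)) : {set V} := \bigcup_(F <- Fs) internal F.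

Definition precF F x y : bool :=
  [&& x \in fV F, y \in fV F, froot F x == froot F y & fdfs F y <= fdfs F x].
Definition precFs (Fs : seq (forest V)) x y : bool :=
  ((x == y) ==> (x \in VFs Fs)) &&
  connect (fun a b => has (fun F => precF F a b) Fs) x y.

Definition same_tree F x y : bool :=
  [&& x \in fV F, y \in fV F & froot F x == froot F y].
Definition path_exists (Fs : seq (forest V)) x y : bool :=
  has (fun F => same_tree F x y) Fs.
Definition path_forest (Fs : seq (forest V)) x y : forest V :=
  nth (forest0 V) Fs (find (fun F => same_tree F x y) Fs).
Definition path_diff F x y : {set V} := (anc F x :\: anc F y) :|: (anc F y :\: anc F x).
Definition path_edges F x y : {set {set V}} := [set [set w; fpar F w] | w in path_diff F x y].
Definition path_vertices F x y : {set V} :=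
  path_diff F x y :|: [set fpar F w | w in path_diff F x y] :|: [set x; y].
Definition path_internal F x y : {set V} := path_vertices F x y :\: [set x; y].
Definition pathE (Fs : seq (forest V)) x y := path_edges (path_forest Fs x y) x y.
Definition pathInt (Fs : seq (forest V)) x y := path_internal (path_forest Fs x y) x y.

End ForestDefs.

Definition forest_data (V : finType) (E M : {set {set V}}) (c : {set V} -> nat)
  (Fs : seq (forest V)) : Prop :=
  [/\ forall i, i < size Fs -> is_forest E M (nth (forest0 V) Fs i),
      cascading Fs,
      Posz (\sum_(F <- Fs) #|leaves F|) = sum_k E M c,
      forall i, nonmatching_colour E M c i -> [disjoint IntFs Fs & colour_vertices E c i] &
      forall i u, i < size Fs ->
        u \in roots (nth (forest0 V) Fs i) :|: leaves (nth (forest0 V) Fs i) ->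
        forall e, e \in fedges (nth (forest0 V) Fs i) -> u \in e -> c e = mcl M c u ].

Definition pair_data (V : finType) (E M : {set {set V}}) (c : {set V} -> nat)
  (Fs : seq (forest V)) (P : {set V * V}) : Prop :=
  [/\ Posz #|P| = sum_k E M c,
      forall p, p \in P -> (p.1 \in VFs Fs) && (p.2 \in VFs Fs),
      {in P &, forall p q, p.1 = q.1 -> p = q},
      forall p, p \in P ->
                  [&& precFs Fs p.1 p.2, p.1 != p.2 & path_exists Fs p.1 p.2] &
      forall p, p \in P -> mcl M c p.1 = mcl M c p.2 ] /\
  [/\ forall p, p \in P -> forall e, e \in pathE Fs p.1 p.2 -> c e = mcl M c p.1,
      forall p, p \in P -> forall z, z \in pathInt Fs p.1 p.2 -> mcl M c z != mcl M c p.1 &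
      forall p q, p \in P -> q \in P -> p != q ->
        [set p.1; p.2] \in M -> [set q.1; q.2] \in M ->
        [disjoint pathInt Fs p.1 p.2 & pathInt Fs q.1 q.2] ].

Definition Pj (V : finType) (M : {set {set V}}) (c : {set V} -> nat) (P : {set V * V}) (j : nat)
  : {set V * V} := [set p in P | (mcl M c p.1 == j) && (mcl M c p.2 == j)].
Definition Dj (V : finType) (M : {set {set V}}) (c : {set V} -> nat) (P : {set V * V}) (j : nat)
  : {set V * V} := [set p in Pj M c P j | [set p.1; p.2] \in M].
Definition Uj (V : finType) (M : {set {set V}}) (c : {set V} -> nat) (P : {set V * V}) (j : nat)
  : {set V} := [set p.1 | p in Pj M c P j].
Definition Vj (V : finType) (M : {set {set V}}) (c : {set V} -> nat) (P : {set V * V}) (j : nat)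
  : {set V} := [set p.2 | p in Pj M c P j].
Definition Sj (V : finType) (M : {set {set V}}) (c : {set V} -> nat) (P : {set V * V}) (j : nat)
  : {set V} := Uj M c P j :|: Vj M c P j.

Definition rp (V : finType) (M : {set {set V}}) (S : {set V}) : int :=
  (Posz #|[set e in M | ~~ [disjoint e & S]]| - 1)%R.

Definition high (V : finType) (M : {set {set V}}) (c : {set V} -> nat) (P : {set V * V}) (j : nat)
  : bool :=
  (((rp M (Sj M c P j))%:~R : rat) >= ((#|Pj M c P j|)%:R - (#|Dj M c P j|)%:R) / 2)%R.

From mathcomp Require Import all_boot all_order all_algebra.
From mathcomp Require Import zify lra.
Import Order.TTheory GRing.Theory Num.Theory.
Set Implicit Arguments. Unset Strict Implicit.

(* The reachability relation behind the order of the cascading forests is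
   antisymmetric: projecting every vertex of the last forest to its root maps a
   chain onto a chain of the shorter sequence, while inside one tree of the last
   forest the dfs index can only decrease along a chain.  Each pair (u, v) of P_j
   is then a strict step u < v with pairwise distinct u's, so a maximal element
   of S_j is not a first coordinate, whence |S_j| >= |P_j| + 1.  The matching
   edges meeting S_j cover it, so |S_j| <= 2 i(S_j; M); this gives (b) and (c),
   and for a low colour both bounds are tight: S_j is a union of matching edges
   and has exactly one vertex outside U_j, which is therefore its maximum.  If
   moreover |S_j| = 2, then S_j is a single pair matched to itself, a pair of D_j,
   contradicting lowness. *)

Section MaximalElements.
Variables (T : finType) (R : rel T).
Hypotheses (R_refl : reflexive R) (R_trans : transitive R) (R_anti : antisymmetric R).

Definition maximal_in (A : {set T}) (t : T) : Prop := {in A, forall v, R t v -> v = t}.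

(* A maximiser of the number of elements below it is maximal. *)
Lemma maximal_above (A : {set T}) x :
  x \in A -> exists2 t, t \in A & R x t /\ maximal_in A t.
Proof.
move=> xA; pose below y := [set z in A | R z y].
have x_above : x \in [pred y in A | R x y] by rewrite inE xA R_refl.
case: (arg_maxnP (fun y => #|below y|) x_above) => t /andP[tA xt] t_max.
exists t => //; split=> // v vA tv.
have sub_tv : below t \subset below v.
  by apply/subsetP=> z; rewrite !inE => /andP[-> zt]; exact: R_trans zt tv.
have /eqP eq_tv : below t == below v.
  by rewrite eqEcard sub_tv; apply: t_max; rewrite /= vA (R_trans xt tv).
have : v \in below t by rewrite eq_tv /below inE vA R_refl.
by rewrite inE => /andP[_ vt]; apply: R_anti; rewrite vt tv.
Qed.

Section PairsAlongR.
Variable Q : {set T * T}.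
Hypotheses (Q_inj : {in Q &, forall p q, p.1 = q.1 -> p = q})
           (Q_lt : forall p, p \in Q -> R p.1 p.2 && (p.1 != p.2)).

Let U := [set p.1 | p in Q].
Let S := U :|: [set p.2 | p in Q].

Lemma pair_fst_mem p : p \in Q -> p.1 \in S.
Proof. by move=> pQ; apply/setUP; left; apply/imsetP; exists p. Qed.

Lemma pair_snd_mem p : p \in Q -> p.2 \in S.
Proof. by move=> pQ; apply/setUP; right; apply/imsetP; exists p. Qed.

Lemma card_heads : #|U| = #|Q|.
Proof. exact: card_in_imset. Qed.

Lemma maximal_notin_heads t : maximal_in S t -> t \notin U.
Proof.
move=> t_max; apply/imsetP=> -[p pQ def_t].
have /andP[lt_p ne_p] := Q_lt pQ.
by move: ne_p; rewrite -def_t (t_max _ (pair_snd_mem pQ)) ?eqxx // def_t.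
Qed.

Lemma card_pairs_lt : Q != set0 -> #|Q| < #|S|.
Proof.
case/set0Pn=> p pQ.
have [t tS [_ t_max]] := maximal_above (pair_fst_mem pQ).
rewrite -card_heads; apply: proper_card; rewrite properE subsetUl /=.
by apply/subsetPn; exists t; last exact: maximal_notin_heads.
Qed.

(* Maximal elements of S lie in S :\: U, which has a single element. *)
Lemma tight_pairs_top x : #|S| = #|Q|.+1 -> x \in S ->
  exists2 t, t \in S & {in S, forall s, R s t}.
Proof.
move=> card_S xS; have [t tS [_ t_max]] := maximal_above xS.
have /cards1P[z def_z] : #|S :\: U| == 1.
  by rewrite cardsDS ?subsetUl // card_S card_heads subSnn.
have top_z u : u \in S -> maximal_in S u -> u = z.
  by move=> uS u_max; apply/set1P; rewrite -def_z inE uS maximal_notin_heads.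
exists t => // s sS; have [t' t'S [st' t'_max]] := maximal_above sS.
by rewrite (top_z t) // -(top_z t').
Qed.

End PairsAlongR.
End MaximalElements.

Section PerfectMatching.
Variables (V : finType) (E M : {set {set V}}).
Hypotheses (E_simple : simple_graph E) (M_perfect : perfect_matching E M).
Implicit Types (S : {set V}) (v w x y : V).

Definition matched_edges S : {set {set V}} := [set e in M | ~~ [disjoint e & S]].

Lemma card_matching_edge e : e \in M -> #|e| = 2.
Proof. by case: M_perfect => /subsetP sME _ eM; apply: E_simple; apply: sME. Qed.

Lemma matching_edge_at v : exists2 e, e \in M & v \in e.
Proof.
case: M_perfect => _ /(_ v) /eqP /cards1P[e def_e].
by have := set11 e; rewrite -def_e inE => /andP[]; exists e.
Qed.

Lemma matching_partner v : exists2 w, w != v & [set v; w] \in M.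
Proof.
have [e eM ve] := matching_edge_at v.
have /eqP /cards2P[x [y [xy def_e]]] := card_matching_edge eM.
move: ve eM; rewrite def_e !inE => /orP[] /eqP->; first by exists y; rewrite // eq_sym.
by exists x; rewrite // setUC.
Qed.

Lemma sub_cover_matched S : S \subset cover (matched_edges S).
Proof.
apply/subsetP=> s sS; have [e eM se] := matching_edge_at s.
apply/bigcupP; exists e => //; rewrite inE eM /=.
by apply/pred0Pn; exists s; rewrite /= se.
Qed.

Lemma card_cover_matched S : #|cover (matched_edges S)| <= 2 * #|matched_edges S|.
Proof.
apply: leq_trans (leq_card_cover _).1 _.
rewrite mulnC -sum_nat_const; apply/eq_leq/eq_bigr=> e.
by rewrite inE => /andP[eM _]; exact: card_matching_edge.
Qed.

Lemma card_le_matched S : #|S| <= 2 * #|matched_edges S|.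
Proof. exact: leq_trans (subset_leq_card (sub_cover_matched S)) (card_cover_matched S). Qed.

Lemma matched_partner_mem S s w : #|S| = 2 * #|matched_edges S| ->
  s \in S -> [set s; w] \in M -> w \in S.
Proof.
move=> card_S sS swM; apply/contraT => wS.
have w_cover : w \in cover (matched_edges S).
  apply/bigcupP; exists [set s; w]; last by rewrite !inE eqxx orbT.
  by rewrite inE swM; apply/pred0Pn; exists s; rewrite /= !inE eqxx.
have : S \subset cover (matched_edges S) :\ w.
  apply/subsetP=> x xS; rewrite !inE (subsetP (sub_cover_matched S)) // andbT.
  by apply: contraNneq wS => <-.
move/subset_leq_card; have := cardsD1 w (cover (matched_edges S)).
by rewrite w_cover card_S; have := card_cover_matched S; lia.
Qed.

Lemma matched_pair_of_closed x y : x != y ->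
  (forall w, [set x; w] \in M -> w \in [set x; y]) -> [set x; y] \in M.
Proof.
move=> _ closed_xy; have [w wx xwM] := matching_partner x.
by move: (closed_xy w xwM); rewrite !inE (negbTE wx) /= => /eqP def_w; rewrite -def_w.
Qed.
End PerfectMatching.

Lemma ge_half_diffE (m p d : nat) :
  (((Posz m - 1)%:~R : rat) >= (p%:R - d%:R) / 2)%R = (p + 2 <= 2 * m + d)%N.
Proof. by rewrite mul2n -addnn -(@ler_nat rat) !natrD intrB; apply/idP/idP => h; lra. Qed.

Lemma rp_ge_halfE (V : finType) (M : {set {set V}}) (S : {set V}) (p : nat) :
  (((rp M S)%:~R : rat) >= (p%:R - 1) / 2)%R = (p < 2 * #|matched_edges M S|)%N.
Proof. by rewrite /rp (ge_half_diffE _ _ 1) addn1 addn2 ltnS. Qed.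

Lemma connect_propagates (T : finType) (e : rel T) (a : pred T) :
  (forall x y, a x -> e x y -> a y) -> forall x y, connect e x y -> a x -> a y.
Proof.
move=> a_closed x _ /connectP[p e_p ->].
by elim: p x e_p => //= y p IHp x /andP[exy /IHp a_last] ax; apply/a_last/(a_closed x).
Qed.

Lemma connect_homo (T : finType) (e e' : rel T) (f : T -> T) :
  (forall x y, e x y -> connect e' (f x) (f y)) ->
  forall x y, connect e x y -> connect e' (f x) (f y).
Proof.
move=> f_e x y xy.
apply: (connect_propagates (a := fun z => connect e' (f x) (f z))) xy _ => //.
by move=> z w xz /f_e; apply: connect_trans.
Qed.

Section Forest.
Variables (V : finType) (E M : {set {set V}}) (F : forest V).
Hypothesis F_forest : is_forest E M F.
Implicit Types x : V.

Lemma iter_fpar_in n x : x \in fV F -> iter n (fpar F) x \in fV F.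
Proof. by case: F_forest => par_in _ _ _ _ xF; elim: n => //= n; apply: par_in. Qed.

Lemma froot_in x : x \in fV F -> froot F x \in fV F.
Proof. exact: iter_fpar_in. Qed.

Lemma fpar_froot x : x \in fV F -> fpar F (froot F x) = froot F x.
Proof. by case: F_forest => _ _ + _ _; apply. Qed.

Lemma froot_froot x : x \in fV F -> froot F (froot F x) = froot F x.
Proof. by move=> xF; rewrite /froot iter_fix // fpar_froot. Qed.

Lemma fdfs_froot x : x \in fV F -> fdfs F (froot F x) <= fdfs F x.
Proof.
move=> xF; have rF := froot_in xF.
have : x \in desc F (froot F x) by rewrite inE xF; apply/imsetP; exists ord_max.
by case: F_forest => _ _ _ _ /(_ _ rF) ->; rewrite inE => /and3P[_ _ /andP[]].
Qed.
End Forest.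

Definition cascade_step (V : finType) (Fs : seq (forest V)) : rel V :=
  fun a b => has (fun F => precF F a b) Fs.

Definition forests_of (V : finType) (E M : {set {set V}}) (Fs : seq (forest V)) : Prop :=
  forall i, i < size Fs -> is_forest E M (nth (forest0 V) Fs i).

Definition root_proj (V : finType) (F : forest V) (v : V) : V :=
  if v \in fV F then froot F v else v.

Section CascadeRcons.
Variables (V : finType) (E M : {set {set V}}) (Fs : seq (forest V)) (F : forest V).
Hypotheses (FsF_forests : forests_of E M (rcons Fs F))
           (FsF_cascading : cascading (rcons Fs F)).

Lemma last_forest : is_forest E M F.
Proof.
by move: (FsF_forests (i := size Fs)); rewrite size_rcons nth_rcons ltnn eqxx; apply.
Qed.

Lemma forests_rcons : forests_of E M Fs.
Proof.
move=> i lt_i; move: (FsF_forests (i := i)); rewrite nth_rcons lt_i size_rcons.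
by apply; apply: ltnW.
Qed.

Lemma cascading_rcons : cascading Fs.
Proof.
case: FsF_cascading => far next; split=> [i k lt_ik lt_k | i lt_i1 r1 r2].
  move: (far i k lt_ik); rewrite size_rcons !nth_rcons lt_k (ltn_trans _ lt_k) //.
    by apply; apply: ltnW.
  by apply: leq_trans lt_ik; rewrite ltnS leqW.
move: (next i); rewrite size_rcons !nth_rcons lt_i1 (ltn_trans _ lt_i1) //.
by apply; apply: ltnW.
Qed.

(* The only vertices that F shares with earlier forests are roots of F: by
   cascading, such a vertex is the unique common vertex of a tree of the
   preceding forest and a tree of F, and that tree's root is common too. *)
Lemma shared_vertex_froot i b : i < size Fs ->
  b \in fV (nth (forest0 V) Fs i) -> b \in fV F -> froot F b = b.
Proof.
set G := nth _ Fs i => lt_i bG bF.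
have G_forest : is_forest E M G by exact: forests_rcons.
have F_forest := last_forest.
case: FsF_cascading => far next; case: (ltnP i.+1 (size Fs)) => [lt_i1 | le_i1].
  move: (far i (size Fs) lt_i1); rewrite size_rcons !nth_rcons lt_i ltnn eqxx.
  by move=> /(_ (ltnSn _)) /disjointFr /(_ bG); rewrite bF.
have def_i1 : i.+1 = size Fs by apply/eqP; rewrite eqn_leq le_i1 lt_i.
move: (next i); rewrite size_rcons !nth_rcons lt_i def_i1 ltnn eqxx -/G.
move=> /(_ (ltnSn _) (froot G b) (froot F b)).
rewrite !inE (froot_in G_forest) ?(froot_in F_forest) //.
rewrite (fpar_froot G_forest) ?(fpar_froot F_forest) // !eqxx.
case/(_ isT isT)/orP.
  by move/disjointFr => /(_ b); rewrite !inE bG bF !eqxx => /(_ isT).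
case/andP=> /setIP[_ rF_treeG] /cards1P[z def_z].
have : b \in [set z] by rewrite -def_z !inE bG bF !eqxx.
have : froot F b \in [set z].
  by rewrite -def_z inE rF_treeG inE (froot_in F_forest) ?(froot_froot F_forest) ?eqxx.
by rewrite !inE => /eqP-> /eqP->.
Qed.

Lemma cascade_step_root_proj a b : cascade_step (rcons Fs F) a b ->
  connect (cascade_step Fs) (root_proj F a) (root_proj F b).
Proof.
rewrite /cascade_step has_rcons => /orP[/and4P[aF bF /eqP eq_root _] | ].
  by rewrite /root_proj aF bF eq_root connect0.
case/(has_nthP (forest0 V)) => i lt_i ab; have /and4P[aG bG _ _] := ab.
have fixed v : v \in fV (nth (forest0 V) Fs i) -> root_proj F v = v.
  by move=> vG; rewrite /root_proj; case: ifP => // vF; exact: shared_vertex_froot vG vF.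
by rewrite !fixed //; apply/connect1/(has_nthP (forest0 V)); exists i.
Qed.

(* Inside one tree of F the dfs index never increases along a chain: steps in F
   lower it, and a chain re-entering F from an earlier forest enters at the root. *)
Lemma fdfs_connect_le x y : x \in fV F -> connect (cascade_step (rcons Fs F)) x y ->
  y \in fV F -> froot F y = froot F x -> fdfs F y <= fdfs F x.
Proof.
move=> xF xy yF eq_root; have F_forest := last_forest.
pose below_x z := (z \in fV F) && (froot F z == froot F x) ==> (fdfs F z <= fdfs F x).
suff : below_x y by rewrite /below_x yF eq_root eqxx.
apply: (connect_propagates _ xy); last by rewrite /below_x leqnn implybT.
move=> z w z_below; rewrite /cascade_step has_rcons => /orP[].
  case/and4P=> zF _ /eqP eq_zw le_wz; apply/implyP=> /andP[_ /eqP w_root].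
  by move: z_below; rewrite /below_x zF eq_zw w_root eqxx; exact: leq_trans le_wz.
case/(has_nthP (forest0 V)) => i lt_i /and4P[_ wG _ _].
apply/implyP=> /andP[wF /eqP w_root].
by rewrite -(shared_vertex_froot lt_i wG wF) w_root (fdfs_froot F_forest).
Qed.

End CascadeRcons.

Lemma cascade_antisym (V : finType) (E M : {set {set V}}) (Fs : seq (forest V)) :
  forests_of E M Fs -> cascading Fs -> antisymmetric (connect (cascade_step Fs)).
Proof.
elim/last_ind: Fs => [_ _ x y | Fs F IHFs FsF_forests FsF_cascading x y].
  by case/andP=> /connectP[[|z p] //= _ ->].
case/andP=> xy yx; have F_forest := last_forest FsF_forests.
have := IHFs (forests_rcons FsF_forests) (cascading_rcons FsF_cascading)
  (root_proj F x) (root_proj F y).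
rewrite !(connect_homo (cascade_step_root_proj FsF_forests FsF_cascading)) //=.
rewrite /root_proj; case: ifP => xF; case: ifP => yF => /(_ isT).
- move=> eq_root; case: F_forest => _ _ _ fdfs_inj _; apply: fdfs_inj => //.
  by apply/eqP; rewrite eqn_leq !(fdfs_connect_le FsF_forests FsF_cascading).
- by move=> def_y; rewrite -def_y (froot_in F_forest) in yF.
- by move=> def_x; rewrite def_x (froot_in F_forest) in xF.
- done.
Qed.

Section ColourClass.
Variables (V : finType) (E M : {set {set V}}) (c : {set V} -> nat).
Variables (Fs : seq (forest V)) (P : {set V * V}) (j : nat).
Hypotheses (E_simple : simple_graph E) (M_perfect : perfect_matching E M).
Hypotheses (Fs_data : forest_data E M c Fs) (P_data : pair_data E M c Fs P).

Local Notation R := (connect (cascade_step Fs)).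
Local Notation Q := (Pj M c P j).
Local Notation S := (Sj M c P j).

Lemma forest_data_antisym : antisymmetric R.
Proof.
by case: Fs_data => Fs_forests Fs_cascading _ _ _; exact: (cascade_antisym Fs_forests).
Qed.

Lemma mem_Pj p : p \in Q -> p \in P.
Proof. by rewrite inE => /andP[]. Qed.

Lemma Pj_inj : {in Q &, forall p q, p.1 = q.1 -> p = q}.
Proof. by case: P_data => -[_ _ P_inj _ _] _ p q /mem_Pj pP /mem_Pj; exact: P_inj. Qed.

Lemma Pj_lt p : p \in Q -> R p.1 p.2 && (p.1 != p.2).
Proof.
case: P_data => -[_ _ _ P_prec _] _ /mem_Pj /P_prec /and3P[/andP[_ p_prec] ne_p _].
by apply/andP; split.
Qed.

Lemma Sj_in_VFs s : s \in S -> s \in VFs Fs.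
Proof.
case: P_data => -[_ P_VFs _ _ _] _.
by case/setUP=> /imsetP[p /mem_Pj /P_VFs /andP[p1F p2F] ->].
Qed.

Lemma card_Pj_lt_Sj : Q != set0 -> #|Q| < #|S|.
Proof.
exact: (card_pairs_lt (connect0 _) (@connect_trans _ _) forest_data_antisym Pj_inj Pj_lt).
Qed.

Lemma highE : high M c P j = (#|Q| + 2 <= 2 * #|matched_edges M S| + #|Dj M c P j|).
Proof. exact: ge_half_diffE. Qed.

Lemma low_colour_tight : ~~ high M c P j -> Q != set0 ->
  [/\ #|Dj M c P j| = 0, #|S| = 2 * #|matched_edges M S| & #|S| = #|Q|.+1].
Proof.
rewrite highE => low /card_Pj_lt_Sj lt_QS.
by have := card_le_matched E_simple M_perfect S; split; lia.
Qed.

Lemma low_colour_max : ~~ high M c P j -> Q != set0 ->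
  exists! v, v \in S /\ forall s, s \in S -> precFs Fs s v.
Proof.
move=> low Q_ne; have [_ _ card_S] := low_colour_tight low Q_ne.
have /set0Pn[p pQ] := Q_ne.
have [t tS t_top] := tight_pairs_top (connect0 _) (@connect_trans _ _) forest_data_antisym
  Pj_inj Pj_lt card_S (pair_fst_mem pQ).
exists t; split.
  by split=> // s sS; rewrite /precFs t_top // andbT; apply/implyP => _; exact: Sj_in_VFs.
move=> v [vS v_top]; apply: forest_data_antisym; rewrite t_top // andbT.
by case/andP: (v_top t tS).
Qed.

Lemma low_colour_card : ~~ high M c P j -> Q != set0 -> 4 <= #|S|.
Proof.
move=> low Q_ne; have [D_0 card_SM card_SQ] := low_colour_tight low Q_ne.
have [le2m | lt_m2] := leqP 2 #|matched_edges M S|; first by lia.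
have /cards1P[p def_Q] : #|Q| == 1.
  by move: Q_ne; rewrite -card_gt0 eqn_leq => ->; rewrite andbT; lia.
have pQ : p \in Q by rewrite def_Q set11.
have /andP[_ ne_p] := Pj_lt pQ.
have def_S : S = [set p.1; p.2].
  apply/eqP; rewrite eq_sym eqEcard cards2 ne_p card_SQ def_Q cards1 leqnn andbT.
  by apply/subsetP=> x /set2P[]->; [exact: pair_fst_mem | exact: pair_snd_mem].
have pM : [set p.1; p.2] \in M.
  apply: (matched_pair_of_closed E_simple M_perfect ne_p) => w.
  rewrite -def_S; apply: (matched_partner_mem E_simple M_perfect card_SM).
  exact: pair_fst_mem.
by move/eqP: D_0; rewrite cards_eq0 => /eqP/setP/(_ p); rewrite inE pQ pM in_set0.
Qed.

End ColourClass.

Local Open Scope ring_scope.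

Theorem lemma8 (V : finType) (E M : {set {set V}}) (c : {set V} -> nat)
  (Fs : seq (forest V)) (P : {set V * V}) :
  simple_graph E -> perfect_matching E M -> optimal_2_colouring E c ->
  forest_data E M c Fs -> pair_data E M c Fs P ->
  forall j : nat, matching_colour M c j -> Pj M c P j != set0 ->
  [/\ (#|Pj M c P j| + 1 <= #|Sj M c P j|)%N,
      ((rp M (Sj M c P j))%:~R : rat) >= ((#|Pj M c P j|)%:R - 1) / 2,
      Dj M c P j != set0 -> high M c P j,
      ~~ high M c P j ->
        (forall s w, s \in Sj M c P j -> [set s; w] \in M -> w \in Sj M c P j) /\
        (exists! v, v \in Sj M c P j /\
                    forall s, s \in Sj M c P j -> precFs Fs s v) &
      ~~ high M c P j -> (4 <= #|Sj M c P j|)%N ].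
Proof.
move=> E_simple M_perfect _ Fs_data P_data j _ Pj_ne.
have lt_PS := card_Pj_lt_Sj Fs_data P_data Pj_ne.
have le_SM := card_le_matched E_simple M_perfect (Sj M c P j).
split.
- by rewrite addn1.
- by rewrite rp_ge_halfE; exact: leq_trans le_SM.
- by rewrite highE -card_gt0; lia.
- move=> low.
  have [_ card_SM _] := low_colour_tight E_simple M_perfect Fs_data P_data low Pj_ne.
  split; first by move=> s w; exact: (matched_partner_mem E_simple M_perfect card_SM).
  exact: (low_colour_max E_simple M_perfect Fs_data P_data low Pj_ne).
- by move=> low; exact: (low_colour_card E_simple M_perfect Fs_data P_data low Pj_ne).
Qed.
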